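(* Let $X=\mathbb{R}$, let $\beta,K,\nu,\gamma,\eta,\xi,\zeta>0$ with $\gamma>\eta$, and define $$a(x):=\gamma-\eta x^2,\qquad b(x):=\xi+\zeta(1-x)^2 .$$ Assume $\gamma>(\eta\beta)^{1/2}$ and $\mathcal{R}_0>1$, where $$\mathcal{R}_0:=\frac{K}{\nu}\Big(\gamma-(\eta\beta)^{1/2}\Big)\Big(\xi+\zeta+\zeta\Big(\frac{\beta}{\eta}\Big)^{1/2}\Big).$$ Then the unique solution $(\overline{s}_E,\overline{I}_E)$ of the problem $$\beta\,\overline{s}_E''+\Big[a(x)-\Big(b(x)+\frac1K\Big)\overline{I}_E-\frac{\overline{S}_E}{K}\Big]\overline{s}_E=0\ \ (x\in\mathbb{R}),\qquad \Big(\int_{\mathbb{R}} b(x)\overline{s}_E(x)\,dx-\nu\Big)\overline{I}_E=0,$$ $$\overline{S}_E:=\int_{\mathbb{R}}\overline{s}_E\,dx,\qquad \overline{s}_E(\cdot)>0,\quad 0<\overline{S}_E<\infty,\quad 0<\overline{I}_E<\infty,$$ is given by $$\overline{s}_E(x)=\overline{S}_E\Big(\frac{1}{2\pi\overline{\sigma}_E^2}\Big)^{1/2}\exp\Big[-\frac{(x-\overline{\mu}_E)^2}{2\overline{\sigma}_E^2}\Big],\qquad \overline{\sigma}_E^2=\Big(\frac{\beta}{\eta+\zeta\overline{I}_E}\Big)^{1/2},\quad \overline{\mu}_E=\frac{\zeta\overline{I}_E}{\eta+\zeta\overline{I}_E},$$ $$\overline{S}_E=K\Big(\gamma-\Big(\frac1K+\frac{\eta\zeta}{\eta+\zeta\overline{I}_E}+\xi\Big)\overline{I}_E-\beta^{1/2}(\eta+\zeta\overline{I}_E)^{1/2}\Big)>0,$$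 where $\overline{I}_E$ is the unique positive solution of the algebraic equation $$(1+\xi K)\,\overline{I}_E=K\Big(\gamma-\eta\frac{\zeta\overline{I}_E}{\eta+\zeta\overline{I}_E}-\beta^{1/2}(\eta+\zeta\overline{I}_E)^{1/2}\Big)-F(\overline{I}_E),$$ $$F(y):=\nu\Big(\xi+\zeta\Big(\frac{\zeta y}{\eta+\zeta y}-1\Big)^2+\zeta\Big(\frac{\beta}{\eta+\zeta y}\Big)^{1/2}\Big)^{-1}.$$
   Context: This is the steady-state (endemic equilibrium) problem of the SI model $\partial_t s=(a(x)-N/K)s-b(x)Is+\beta\partial_x^2 s$, $I'=(\int b s\,dx-\nu)I$, $N=\int s\,dx+I$. The quantity $\mathcal{R}_0$ defined in the claim is the basic reproduction number for these choices of $a$ and $b$. *)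

From Stdlib Require Import Reals.
From Coquelicot Require Import Coquelicot.
Open Scope R_scope.

Definition a_fun (gamma eta : R) (x : R) : R := gamma - eta * x ^ 2.
Definition b_fun (xi zeta : R) (x : R) : R := xi + zeta * (1 - x) ^ 2.

Definition basic_R0 (beta K nu gamma eta xi zeta : R) : R :=
  K / nu * (gamma - sqrt (eta * beta)) * (xi + zeta + zeta * sqrt (beta / eta)).

Definition is_int_R (f : R -> R) (l : R) : Prop :=
  is_RInt_gen f (Rbar_locally m_infty) (Rbar_locally p_infty) l.

Definition endemic_solution (beta K nu gamma eta xi zeta : R)
    (s : R -> R) (I S : R) : Prop :=
  (exists s' s'' : R -> R, forall x,
      is_derive s x (s' x) /\ is_derive s' x (s'' x) /\
      beta * s'' x
        + (a_fun gamma eta x - (b_fun xi zeta x + / K) * I - S / K) * s x = 0) /\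
  is_int_R s S /\
  (exists B, is_int_R (fun x => b_fun xi zeta x * s x) B /\ (B - nu) * I = 0) /\
  (forall x, 0 < s x) /\ 0 < S /\ 0 < I.

Definition F_fun (beta nu eta xi zeta : R) (y : R) : R :=
  nu / (xi + zeta * (zeta * y / (eta + zeta * y) - 1) ^ 2
          + zeta * sqrt (beta / (eta + zeta * y))).

Definition alg_eq (beta K nu gamma eta xi zeta : R) (y : R) : Prop :=
  (1 + xi * K) * y =
    K * (gamma - eta * (zeta * y / (eta + zeta * y))
           - sqrt beta * sqrt (eta + zeta * y))
    - F_fun beta nu eta xi zeta y.

Definition sigma2_E (beta eta zeta I : R) : R := sqrt (beta / (eta + zeta * I)).
Definition mu_E (eta zeta I : R) : R := zeta * I / (eta + zeta * I).

Definition S_E (beta K gamma eta xi zeta I : R) : R :=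
  K * (gamma - (/ K + eta * zeta / (eta + zeta * I) + xi) * I
         - sqrt beta * sqrt (eta + zeta * I)).

Definition s_E (beta eta zeta S I : R) (x : R) : R :=
  S * sqrt (1 / (2 * PI * sigma2_E beta eta zeta I))
    * exp (- (x - mu_E eta zeta I) ^ 2 / (2 * sigma2_E beta eta zeta I)).

(* Completing the square, the steady-state equation for [s] reads
   [s'' = ((x - mu) ^ 2 / v ^ 2 - 1 / v + kappa) s], with [v = sigma2_E I],
   [mu = mu_E I] and [kappa = (S - S_E I) / (K beta)]; the Gaussian [g] of mean
   [mu] and variance [v] solves it with [kappa = 0].  For a positive integrable
   solution the Wronskian [W = s' g - s g'] is monotone ([W' = kappa s g]), so if
   [W y0 <> 0] then [|W| >= |W y0|] on a half-line, on which either
   [s = (s / g) g] stays above a positive constant, contradicting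
   integrability, or [s / g] becomes negative.  So [W = 0], whence
   [kappa = 0] and [s] is a multiple of [g].  Integrating [s] and [b s] with
   [int e^(-x^2) = sqrt PI] (obtained by differentiating
   [(int_0^t e^(-x^2))^2 + int_0^1 e^(-t^2 (1 + x^2)) / (1 + x^2)]) turns
   [int b s = nu] into the algebraic equation for [I], whose residual is strictly
   decreasing, positive at [0] when [R0 > 1] and negative for large [I]. *)

From Stdlib Require Import Reals Lra Psatz.
From Coquelicot Require Import Coquelicot.
Open Scope R_scope.

Lemma exp_le_compat (x y : R) : x <= y -> exp x <= exp y.
Proof. intros [H|H]; [left; now apply exp_increasing | now subst; right]. Qed.

Lemma exp_ge_1 (x : R) : 0 <= x -> 1 <= exp x.
Proof. intros H. rewrite <- exp_0. now apply exp_le_compat. Qed.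

Lemma continuous_of_is_derive (f : R -> R) (f' : R) (x : R) :
  is_derive f x f' -> continuous f x.
Proof. intros H. apply (@ex_derive_continuous R_AbsRing R_NormedModule). now exists f'. Qed.

Lemma MVT_is_derive (f f' : R -> R) (a b : R) :
  a <= b -> (forall x, is_derive f x (f' x)) ->
  exists c, a <= c <= b /\ f b - f a = f' c * (b - a).
Proof.
  intros Hab H. destruct (MVT_gen f a b f') as [c [Hc E]].
  - intros x _. apply H.
  - intros x _. apply continuity_pt_filterlim, (continuous_of_is_derive f (f' x)), H.
  - exists c. now rewrite Rmin_left, Rmax_right in Hc by lra.
Qed.

Lemma is_derive_0_const (f : R -> R) (x y : R) :
  (forall z, is_derive f z 0) -> f x = f y.
Proof.
  intros H. destruct (Rle_dec x y) as [Hxy|Hxy];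
    [destruct (MVT_is_derive f (fun _ => 0) x y) as [c [_ E]]
    |destruct (MVT_is_derive f (fun _ => 0) y x) as [c [_ E]]]; auto; lra.
Qed.

Lemma is_int_R_antiderivative (f F : R -> R) (Lm Lp : R) :
  (forall x, is_derive F x (f x)) -> (forall x, continuous f x) ->
  is_lim F m_infty Lm -> is_lim F p_infty Lp -> is_int_R f (Lp - Lm).
Proof.
  intros HD HC Hm Hp.
  assert (Df : forall x, Derive F x = f x) by (intros x; apply is_derive_unique, HD).
  apply (is_RInt_gen_ext (Derive F)).
  - apply filter_forall. intros ab x _. apply Df.
  - apply is_RInt_gen_Derive; auto.
    + apply filter_forall. intros ab x _. exists (f x). apply HD.
    + apply filter_forall. intros ab x _.
      apply (continuous_ext f); [intros y; now rewrite Df | apply HC].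
Qed.

Lemma is_int_R_unique (f : R -> R) (l1 l2 : R) :
  is_int_R f l1 -> is_int_R f l2 -> l1 = l2.
Proof.
  (* Applying [is_RInt_gen_unique] through the folded [is_int_R] makes unification diverge. *)
  unfold is_int_R. intros H1 H2.
  assert (P1 := Proper_StrongProper _ (Rbar_locally_filter m_infty)).
  assert (P2 := Proper_StrongProper _ (Rbar_locally_filter p_infty)).
  apply (@is_RInt_gen_unique R_CompleteNormedModule _ _ P1 P2) in H1.
  apply (@is_RInt_gen_unique R_CompleteNormedModule _ _ P1 P2) in H2.
  congruence.
Qed.

Lemma is_int_R_ext (f g : R -> R) (l : R) :
  (forall x, f x = g x) -> is_int_R f l -> is_int_R g l.
Proof. intros E. apply is_RInt_gen_ext. apply filter_forall. intros ab x _. apply E. Qed.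

Lemma is_int_R_scal (f : R -> R) (a l : R) :
  is_int_R f l -> is_int_R (fun x => a * f x) (a * l).
Proof. apply (is_RInt_gen_scal f a l). Qed.

Lemma ex_RInt_continuous_R (f : R -> R) (a b : R) :
  (forall x, continuous f x) -> ex_RInt f a b.
Proof. intros H. apply (@ex_RInt_continuous R_CompleteNormedModule). intros; apply H. Qed.

Lemma RInt_le_is_int_R (s : R -> R) (S a b : R) :
  (forall x, continuous s x) -> (forall x, 0 <= s x) -> is_int_R s S ->
  a <= b -> RInt s a b <= S.
Proof.
  intros Hc Hp Hs Hab. apply Rnot_lt_le. intros Hlt.
  destruct (Hs (ball S (mkposreal _ (proj2 (Rlt_0_minus _ _) Hlt)))) as [P Q [M HM] [N HN] HPQ].
  { apply locally_ball. }
  set (a' := Rmin a (M - 1)). set (b' := Rmax b (N + 1)).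
  assert (Ha' : a' <= a) by apply Rmin_l.
  assert (Hb' : b <= b') by apply Rmax_l.
  destruct (HPQ a' b') as [y [Hy Hball]].
  { apply HM. unfold a'. pose proof (Rmin_r a (M - 1)). lra. }
  { apply HN. unfold b'. pose proof (Rmax_r b (N + 1)). lra. }
  apply (@is_RInt_unique R_CompleteNormedModule) in Hy. simpl in Hy.
  assert (Hsplit : RInt s a' a + RInt s a b + RInt s b b' = RInt s a' b').
  { rewrite <- (@RInt_Chasles R_CompleteNormedModule s a' b b'),
      <- (@RInt_Chasles R_CompleteNormedModule s a' a b); auto using ex_RInt_continuous_R. }
  assert (0 <= RInt s a' a) by (apply RInt_ge_0; auto using ex_RInt_continuous_R).
  assert (0 <= RInt s b b') by (apply RInt_ge_0; auto using ex_RInt_continuous_R).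
  apply Rabs_lt_between' in Hball. simpl in Hball. lra.
Qed.

Lemma RInt_ge_const (s : R -> R) (k a b : R) :
  (forall x, continuous s x) -> a <= b -> (forall x, a <= x <= b -> k <= s x) ->
  k * (b - a) <= RInt s a b.
Proof.
  intros Hc Hab Hk.
  replace (k * (b - a)) with (RInt (fun _ => k) a b)
    by (rewrite RInt_const; unfold scal; simpl; unfold mult; simpl; ring).
  apply RInt_le; auto using ex_RInt_continuous_R, continuous_const.
  intros x Hx. apply Hk. lra.
Qed.

Lemma not_is_int_R_ge_right (s : R -> R) (S k Y : R) :
  (forall x, continuous s x) -> (forall x, 0 <= s x) -> 0 < k ->
  (forall x, Y <= x -> k <= s x) -> ~ is_int_R s S.
Proof.
  intros Hc Hp Hk Hb Hs.
  set (b := Y + (Rabs S + 1) / k).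
  assert (Hlen : k * (b - Y) = Rabs S + 1) by (unfold b; field; lra).
  assert (HYb : Y <= b).
  { unfold b. pose proof (Rabs_pos S).
    assert (0 < (Rabs S + 1) / k) by (apply Rdiv_lt_0_compat; lra). lra. }
  pose proof (RInt_ge_const s k Y b Hc HYb (fun x Hx => Hb x (proj1 Hx))).
  pose proof (RInt_le_is_int_R s S Y b Hc Hp Hs HYb).
  pose proof (Rle_abs S). lra.
Qed.

Lemma not_is_int_R_ge_left (s : R -> R) (S k Y : R) :
  (forall x, continuous s x) -> (forall x, 0 <= s x) -> 0 < k ->
  (forall x, x <= Y -> k <= s x) -> ~ is_int_R s S.
Proof.
  intros Hc Hp Hk Hb Hs.
  set (a := Y - (Rabs S + 1) / k).
  assert (Hlen : k * (Y - a) = Rabs S + 1) by (unfold a; field; lra).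
  assert (HaY : a <= Y).
  { unfold a. pose proof (Rabs_pos S).
    assert (0 < (Rabs S + 1) / k) by (apply Rdiv_lt_0_compat; lra). lra. }
  pose proof (RInt_ge_const s k a Y Hc HaY (fun x Hx => Hb x (proj2 Hx))).
  pose proof (RInt_le_is_int_R s S a Y Hc Hp Hs HaY).
  pose proof (Rle_abs S). lra.
Qed.

Definition gauss (x : R) : R := exp (- x ^ 2).

Lemma gauss_pos (x : R) : 0 < gauss x.
Proof. apply exp_pos. Qed.

Lemma gauss_opp (x : R) : gauss (- x) = gauss x.
Proof. unfold gauss. f_equal. ring. Qed.

Lemma continuous_gauss (x : R) : continuous gauss x.
Proof.
  apply (continuous_of_is_derive _ (-2 * x * gauss x)).
  unfold gauss. auto_derive; auto. simpl. ring.
Qed.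

Definition gauss_int (t : R) : R := RInt gauss 0 t.

Lemma is_derive_gauss_int (t : R) : is_derive gauss_int t (gauss t).
Proof.
  apply (is_derive_RInt gauss gauss_int 0).
  - apply filter_forall. intros b.
    apply (@RInt_correct R_CompleteNormedModule), ex_RInt_continuous_R, continuous_gauss.
  - apply continuous_gauss.
Qed.

Lemma gauss_int_nonneg (t : R) : 0 <= t -> 0 <= gauss_int t.
Proof.
  intros Ht. apply RInt_ge_0; auto using ex_RInt_continuous_R, continuous_gauss.
  intros x _. apply Rlt_le, gauss_pos.
Qed.

Lemma gauss_int_opp (t : R) : gauss_int (- t) = - gauss_int t.
Proof.
  unfold gauss_int.
  replace 0 with (-1 * 0 + 0) at 1 by ring. replace (- t) with (-1 * t + 0) by ring.
  rewrite <- (@RInt_comp_lin R_CompleteNormedModule)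
    by apply ex_RInt_continuous_R, continuous_gauss.
  rewrite <- (RInt_ext (fun y => - gauss y)).
  - rewrite (@RInt_opp R_CompleteNormedModule); auto using ex_RInt_continuous_R, continuous_gauss.
  - intros x _. unfold scal; simpl; unfold mult; simpl.
    replace (-1 * x + 0) with (- x) by ring. rewrite gauss_opp. ring.
Qed.

Definition gauss_tail_integrand (t x : R) : R := exp (- t ^ 2 * (1 + x ^ 2)) / (1 + x ^ 2).

Definition gauss_tail (t : R) : R := RInt (gauss_tail_integrand t) 0 1.

Lemma one_plus_sqsqrt_2v_pos (x : R) : 0 < 1 + x ^ 2.
Proof. nra. Qed.

Lemma continuous_gauss_tail_integrand (t x : R) : continuous (gauss_tail_integrand t) x.
Proof.
  apply (@ex_derive_continuous R_AbsRing R_NormedModule). unfold gauss_tail_integrand.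
  auto_derive. pose proof (one_plus_sqsqrt_2v_pos x). lra.
Qed.

Lemma is_derive_gauss_tail_integrand (t x : R) :
  is_derive (fun u => gauss_tail_integrand u x) t (-2 * t * exp (- t ^ 2 * (1 + x ^ 2))).
Proof.
  pose proof (one_plus_sqsqrt_2v_pos x). unfold gauss_tail_integrand.
  auto_derive; [lra|]. simpl. field. simpl in H. lra.
Qed.

Lemma continuity_2d_gauss_tail_derivative (t x : R) :
  continuity_2d_pt (fun u y => -2 * u * exp (- u ^ 2 * (1 + y ^ 2))) t x.
Proof.
  apply continuity_2d_pt_mult.
  - apply continuity_2d_pt_mult; [apply continuity_2d_pt_const | apply continuity_2d_pt_id1].
  - apply (continuity_1d_2d_pt_comp exp (fun u y => - u ^ 2 * (1 + y ^ 2))).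
    + apply continuity_pt_filterlim, continuous_exp.
    + apply (continuity_2d_pt_ext (fun u y => - (u * u) * (1 + y * y))); [intros; ring|].
      apply continuity_2d_pt_mult.
      * apply continuity_2d_pt_opp, continuity_2d_pt_mult; apply continuity_2d_pt_id1.
      * apply continuity_2d_pt_plus; [apply continuity_2d_pt_const|].
        apply continuity_2d_pt_mult; apply continuity_2d_pt_id2.
Qed.

Lemma is_derive_gauss_tail (t : R) : is_derive gauss_tail t (-2 * gauss t * gauss_int t).
Proof.
  assert (Hint : RInt (fun x => -2 * t * exp (- t ^ 2 * (1 + x ^ 2))) 0 1
                 = -2 * gauss t * gauss_int t).
  { rewrite (RInt_ext _ (fun x => scal (-2 * gauss t) (scal t (gauss (t * x + 0))))).
    2:{ intros x _. unfold gauss, scal; simpl; unfold mult; simpl.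
        replace (- (t * (t * 1)) * (1 + x * (x * 1))) with
          (- (t * (t * 1)) + - ((t * x + 0) * ((t * x + 0) * 1))) by ring.
        rewrite exp_plus. ring. }
    rewrite (@RInt_scal R_CompleteNormedModule).
    2:{ apply ex_RInt_continuous_R. intros x.
        apply (@ex_derive_continuous R_AbsRing R_NormedModule).
        unfold gauss, scal; simpl; unfold mult; simpl. auto_derive; auto. }
    rewrite (@RInt_comp_lin R_CompleteNormedModule) by apply ex_RInt_continuous_R, continuous_gauss.
    unfold gauss_int, scal; simpl; unfold mult; simpl.
    replace (t * 0 + 0) with 0 by ring. replace (t * 1 + 0) with t by ring. ring. }
  rewrite <- Hint. unfold gauss_tail.
  rewrite <- (RInt_ext (fun x => Derive (fun u => gauss_tail_integrand u x) t)).
  2:{ intros x _. apply is_derive_unique, is_derive_gauss_tail_integrand. }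
  apply (is_derive_RInt_param gauss_tail_integrand 0 1 t).
  - apply filter_forall. intros u x _. eexists. apply is_derive_gauss_tail_integrand.
  - intros x _.
    apply (continuity_2d_pt_ext (fun u y => -2 * u * exp (- u ^ 2 * (1 + y ^ 2)))).
    + intros u y. symmetry. apply is_derive_unique, is_derive_gauss_tail_integrand.
    + apply continuity_2d_gauss_tail_derivative.
  - apply filter_forall. intros u.
    apply ex_RInt_continuous_R, continuous_gauss_tail_integrand.
Qed.

Lemma gauss_tail_0 : gauss_tail 0 = PI / 4.
Proof.
  unfold gauss_tail. rewrite <- atan_1.
  replace (atan 1) with (atan 1 - atan 0) by (rewrite atan_0; ring).
  apply is_RInt_unique, (@is_RInt_derive R_CompleteNormedModule atan).
  - intros x _. replace (gauss_tail_integrand 0 x) with (/ (1 + x²)).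
    + apply is_derive_atan.
    + unfold gauss_tail_integrand, Rsqr. pose proof (one_plus_sqsqrt_2v_pos x).
      replace (- 0 ^ 2 * (1 + x ^ 2)) with 0 by ring. rewrite exp_0. simpl in *. field. lra.
  - intros x _. apply continuous_gauss_tail_integrand.
Qed.

Lemma gauss_int_sqr_add_tail (t : R) : gauss_int t ^ 2 + gauss_tail t = PI / 4.
Proof.
  rewrite <- gauss_tail_0.
  replace (gauss_tail 0) with (gauss_int 0 ^ 2 + gauss_tail 0)
    by (unfold gauss_int; rewrite RInt_point; unfold zero; simpl; ring).
  apply (is_derive_0_const (fun t => gauss_int t ^ 2 + gauss_tail t)). intros z.
  replace 0 with (INR 2 * gauss z * gauss_int z ^ Init.Nat.pred 2 + -2 * gauss z * gauss_int z)
    by (simpl; ring).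
  apply (@is_derive_plus R_AbsRing R_NormedModule).
  - apply (is_derive_pow gauss_int 2 z (gauss z)), is_derive_gauss_int.
  - apply is_derive_gauss_tail.
Qed.

Lemma gauss_tail_bounds (t : R) : 0 <= gauss_tail t <= gauss t.
Proof.
  unfold gauss_tail. split.
  - apply RInt_ge_0; [lra | apply ex_RInt_continuous_R, continuous_gauss_tail_integrand |].
    intros x _. apply Rlt_le, Rdiv_lt_0_compat; [apply exp_pos | apply one_plus_sqsqrt_2v_pos].
  - replace (gauss t) with (RInt (fun _ => gauss t) 0 1)
      by (rewrite RInt_const; unfold scal; simpl; unfold mult; simpl; ring).
    apply RInt_le; [lra | apply ex_RInt_continuous_R, continuous_gauss_tail_integrand
                   | apply ex_RInt_continuous_R, continuous_const |].
    intros x _. unfold gauss_tail_integrand, gauss.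
    pose proof (one_plus_sqsqrt_2v_pos x).
    assert (exp (- t ^ 2 * (1 + x ^ 2)) <= exp (- t ^ 2))
      by (apply exp_le_compat; nra).
    apply Rle_trans with (exp (- t ^ 2 * (1 + x ^ 2))); [|exact H0].
    unfold Rdiv. pose proof (exp_pos (- t ^ 2 * (1 + x ^ 2))).
    rewrite <- (Rmult_1_r (exp _)) at 2. apply Rmult_le_compat_l; [lra|].
    rewrite <- Rinv_1. apply Rinv_le_contravar; nra.
Qed.

Lemma is_lim_p_infty_squeeze_inv (f : R -> R) :
  (forall x, 0 < x -> 0 <= f x <= / x) -> is_lim f p_infty 0.
Proof.
  intros H. apply (is_lim_le_le_loc (fun _ => 0) (fun x => / x)).
  - exists 0. intros x Hx. apply H. lra.
  - apply is_lim_const.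
  - replace (Finite 0) with (Rbar_inv p_infty) by reflexivity.
    apply (is_lim_inv (fun x => x)); [apply is_lim_id | discriminate].
Qed.

Lemma is_lim_scal_l_finite (f : R -> R) (a : R) (x : Rbar) (l : R) :
  is_lim f x l -> is_lim (fun y => a * f y) x (a * l).
Proof. apply (is_lim_scal_l f a x l). Qed.

Lemma is_lim_m_infty_opp (f : R -> R) (l : Rbar) :
  is_lim (fun x => f (- x)) p_infty l -> is_lim f m_infty l.
Proof.
  intros H. apply (is_lim_ext (fun x => f (- - x))); [intros; now rewrite Ropp_involutive|].
  apply (is_lim_comp (fun x => f (- x)) Ropp m_infty l p_infty); auto.
  - replace p_infty with (Rbar_opp m_infty) by reflexivity. apply is_lim_opp, is_lim_id.
  - exists 0. intros; discriminate.
Qed.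

Lemma is_lim_comp_pos_lin (f : R -> R) (a b : R) (l : Rbar) : 0 < a ->
  (is_lim f p_infty l -> is_lim (fun y => f (a * y + b)) p_infty l) /\
  (is_lim f m_infty l -> is_lim (fun y => f (a * y + b)) m_infty l).
Proof.
  intros Ha. split; intros H; apply is_lim_comp_lin; try lra;
    simpl; destruct Rle_dec; try lra; destruct Rle_lt_or_eq_dec; try lra; exact H.
Qed.

Lemma gauss_le_inv (x : R) : gauss x <= / (1 + x ^ 2).
Proof.
  unfold gauss. rewrite exp_Ropp.
  apply Rinv_le_contravar; [apply one_plus_sqsqrt_2v_pos | apply exp_ineq1_le].
Qed.

Lemma is_lim_gauss_p_infty : is_lim gauss p_infty 0.
Proof.
  apply is_lim_p_infty_squeeze_inv. intros x Hx.
  pose proof (gauss_pos x). pose proof (gauss_le_inv x).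
  split; [lra|]. eapply Rle_trans; [eassumption|]. apply Rinv_le_contravar; nra.
Qed.

Lemma is_lim_gauss_m_infty : is_lim gauss m_infty 0.
Proof.
  apply is_lim_m_infty_opp, (is_lim_ext gauss); [intros; now rewrite gauss_opp|].
  apply is_lim_gauss_p_infty.
Qed.

Lemma is_lim_id_gauss_p_infty : is_lim (fun x => x * gauss x) p_infty 0.
Proof.
  apply is_lim_p_infty_squeeze_inv. intros x Hx.
  pose proof (gauss_pos x). pose proof (gauss_le_inv x). pose proof (one_plus_sqsqrt_2v_pos x).
  split; [nra|].
  apply Rle_trans with (x * / (1 + x ^ 2)); [apply Rmult_le_compat_l; lra|].
  apply (Rmult_le_reg_l (x * (1 + x ^ 2))); [nra|].
  field_simplify; lra.
Qed.

Lemma is_lim_id_gauss_m_infty : is_lim (fun x => x * gauss x) m_infty 0.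
Proof.
  apply is_lim_m_infty_opp.
  apply (is_lim_ext (fun x => - (x * gauss x))); [intros; rewrite gauss_opp; ring|].
  replace (Finite 0) with (Rbar_opp 0) by (simpl; now rewrite Ropp_0).
  apply is_lim_opp, is_lim_id_gauss_p_infty.
Qed.

Lemma is_lim_gauss_int_p_infty : is_lim gauss_int p_infty (sqrt PI / 2).
Proof.
  assert (Hlim : sqrt (PI / 4) = sqrt PI / 2).
  { rewrite sqrt_div_alt by lra. f_equal. replace 4 with (2 ^ 2) by ring. apply sqrt_pow2. lra. }
  rewrite <- Hlim.
  apply (is_lim_ext_loc (fun t => sqrt (PI / 4 - gauss_tail t))).
  { exists 0. intros t Ht. rewrite <- (gauss_int_sqr_add_tail t).
    replace (gauss_int t ^ 2 + gauss_tail t - gauss_tail t) with (gauss_int t ^ 2) by ring.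
    apply sqrt_pow2, gauss_int_nonneg. lra. }
  apply (filterlim_comp _ _ _ (fun t => PI / 4 - gauss_tail t) sqrt _ (locally (PI / 4)));
    [|apply continuous_sqrt].
  assert (Htail : is_lim gauss_tail p_infty 0).
  { apply (is_lim_le_le_loc (fun _ => 0) gauss); [|apply is_lim_const | apply is_lim_gauss_p_infty].
    exists 0. intros t _. apply gauss_tail_bounds. }
  pose proof (is_lim_minus' (fun _ => PI / 4) gauss_tail p_infty _ _ (is_lim_const _ _) Htail) as H.
  rewrite Rminus_0_r in H. exact H.
Qed.

Lemma is_lim_gauss_int_m_infty : is_lim gauss_int m_infty (- (sqrt PI / 2)).
Proof.
  apply is_lim_m_infty_opp.
  apply (is_lim_ext (fun t => - gauss_int t)); [intros; now rewrite gauss_int_opp|].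
  apply (is_lim_opp gauss_int p_infty (sqrt PI / 2)), is_lim_gauss_int_p_infty.
Qed.

Definition gaussian (v m x : R) : R := exp (- (x - m) ^ 2 / (2 * v)).

Section Gaussian.
Variables (v m : R).
Hypothesis v_pos : 0 < v.

Let r := sqrt (2 * v).

Lemma gaussian_pos (x : R) : 0 < gaussian v m x.
Proof. apply exp_pos. Qed.

Lemma gaussian_sqr_mul_exp (x : R) : gaussian v m x ^ 2 * exp ((x - m) ^ 2 / v) = 1.
Proof.
  unfold gaussian. simpl. rewrite !Rmult_1_r, <- !exp_plus, <- exp_0. f_equal. field. lra.
Qed.

Lemma exp_mul_gaussian_ge_1 (x y : R) :
  (y - m) ^ 2 <= 2 * (x - m) ^ 2 -> 1 <= exp ((x - m) ^ 2 / v) * gaussian v m y.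
Proof.
  intros H. unfold gaussian. rewrite <- exp_0, <- exp_plus. apply exp_le_compat.
  replace ((x - m) ^ 2 / v + - (y - m) ^ 2 / (2 * v))
    with ((2 * (x - m) ^ 2 - (y - m) ^ 2) / (2 * v))
    by (field; lra).
  apply Rdiv_le_0_compat; lra.
Qed.

Lemma is_derive_gaussian (x : R) :
  is_derive (gaussian v m) x (- (x - m) / v * gaussian v m x).
Proof.
  unfold gaussian. auto_derive; [easy|].
  replace (- ((x + - m) * ((x + - m) * 1)) * / (2 * v)) with (- (x - m) ^ 2 / (2 * v))
    by (unfold Rdiv; ring).
  field. lra.
Qed.

Lemma is_derive_gaussian_derivative (x : R) :
  is_derive (fun y => - (y - m) / v * gaussian v m y) x
    (((x - m) ^ 2 / v ^ 2 - / v) * gaussian v m x).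
Proof.
  replace (((x - m) ^ 2 / v ^ 2 - / v) * gaussian v m x)
    with (- / v * gaussian v m x + - (x - m) / v * (- (x - m) / v * gaussian v m x))
    by (field; lra).
  apply (@is_derive_mult R_AbsRing (fun y => - (y - m) / v) (gaussian v m));
    [auto_derive; auto; field; lra | apply is_derive_gaussian | intros; apply Rmult_comm].
Qed.

Lemma continuous_gaussian (x : R) : continuous (gaussian v m) x.
Proof. eapply continuous_of_is_derive, is_derive_gaussian. Qed.

Lemma sqrt_2v_pos : 0 < r.
Proof. apply sqrt_lt_R0. lra. Qed.

Lemma gaussian_gauss (x : R) : gaussian v m x = gauss (/ r * x + - m / r).
Proof.
  pose proof sqrt_2v_pos. assert (Hr : r ^ 2 = 2 * v) by (apply pow2_sqrt; lra).
  unfold gaussian, gauss. f_equal. rewrite <- Hr. field. lra.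
Qed.

Lemma is_lim_gaussian_affine (f : R -> R) (l : Rbar) :
  (is_lim f p_infty l -> is_lim (fun x => f (/ r * x + - m / r)) p_infty l) /\
  (is_lim f m_infty l -> is_lim (fun x => f (/ r * x + - m / r)) m_infty l).
Proof. apply is_lim_comp_pos_lin, Rinv_0_lt_compat, sqrt_2v_pos. Qed.

Lemma is_lim_gaussian_p_infty : is_lim (gaussian v m) p_infty 0.
Proof.
  apply (is_lim_ext (fun x => gauss (/ r * x + - m / r))); [intros; now rewrite gaussian_gauss|].
  apply is_lim_gaussian_affine, is_lim_gauss_p_infty.
Qed.

Lemma is_lim_gaussian_m_infty : is_lim (gaussian v m) m_infty 0.
Proof.
  apply (is_lim_ext (fun x => gauss (/ r * x + - m / r))); [intros; now rewrite gaussian_gauss|].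
  apply is_lim_gaussian_affine, is_lim_gauss_m_infty.
Qed.

Lemma centered_gaussian (x : R) :
  (x - m) * gaussian v m x = r * ((/ r * x + - m / r) * gauss (/ r * x + - m / r)).
Proof. pose proof sqrt_2v_pos. rewrite gaussian_gauss. field. lra. Qed.

Lemma is_lim_centered_gaussian_p_infty : is_lim (fun x => (x - m) * gaussian v m x) p_infty 0.
Proof.
  apply (is_lim_ext _ _ _ _ (fun x => eq_sym (centered_gaussian x))).
  rewrite <- (Rmult_0_r r).
  apply is_lim_scal_l_finite, (is_lim_gaussian_affine (fun y => y * gauss y)).
  apply is_lim_id_gauss_p_infty.
Qed.

Lemma is_lim_centered_gaussian_m_infty : is_lim (fun x => (x - m) * gaussian v m x) m_infty 0.
Proof.
  apply (is_lim_ext _ _ _ _ (fun x => eq_sym (centered_gaussian x))).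
  rewrite <- (Rmult_0_r r).
  apply is_lim_scal_l_finite, (is_lim_gaussian_affine (fun y => y * gauss y)).
  apply is_lim_id_gauss_m_infty.
Qed.

Definition gaussian_primitive (x : R) : R := r * gauss_int (/ r * x + - m / r).

Lemma is_derive_gaussian_primitive (x : R) : is_derive gaussian_primitive x (gaussian v m x).
Proof.
  pose proof sqrt_2v_pos. unfold gaussian_primitive. rewrite gaussian_gauss.
  replace (gauss (/ r * x + - m / r)) with (r * (/ r * gauss (/ r * x + - m / r))) by (field; lra).
  apply is_derive_scal, (is_derive_comp gauss_int (fun x => / r * x + - m / r)).
  - apply is_derive_gauss_int.
  - auto_derive; auto. ring.
Qed.

Lemma is_lim_gaussian_primitive_p_infty : is_lim gaussian_primitive p_infty (r * (sqrt PI / 2)).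
Proof. apply is_lim_scal_l_finite, is_lim_gaussian_affine, is_lim_gauss_int_p_infty. Qed.

Lemma is_lim_gaussian_primitive_m_infty : is_lim gaussian_primitive m_infty (r * - (sqrt PI / 2)).
Proof. apply is_lim_scal_l_finite, is_lim_gaussian_affine, is_lim_gauss_int_m_infty. Qed.

Lemma gaussian_mass : r * (sqrt PI / 2) - r * - (sqrt PI / 2) = sqrt (2 * PI * v).
Proof.
  unfold r. replace (2 * PI * v) with (2 * v * PI) by ring.
  rewrite (sqrt_mult (2 * v) PI) by (pose proof PI_RGT_0; lra). field.
Qed.

Lemma gaussian_normalization : sqrt (1 / (2 * PI * v)) * sqrt (2 * PI * v) = 1.
Proof.
  pose proof PI_RGT_0. rewrite <- sqrt_mult by (try apply Rlt_le, Rdiv_lt_0_compat; nra).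
  replace (1 / (2 * PI * v) * (2 * PI * v)) with 1 by (field; lra). apply sqrt_1.
Qed.

Lemma is_int_R_gaussian : is_int_R (gaussian v m) (sqrt (2 * PI * v)).
Proof.
  rewrite <- gaussian_mass.
  apply (is_int_R_antiderivative _ gaussian_primitive).
  - apply is_derive_gaussian_primitive.
  - apply continuous_gaussian.
  - apply is_lim_gaussian_primitive_m_infty.
  - apply is_lim_gaussian_primitive_p_infty.
Qed.

Lemma is_int_R_b_gaussian (xi zeta : R) :
  is_int_R (fun x => b_fun xi zeta x * gaussian v m x)
    (sqrt (2 * PI * v) * (xi + zeta * (m - 1) ^ 2 + zeta * v)).
Proof.
  (* [b g = c g - 2 zeta (m - 1) v g' - zeta v ((x - m) g)'], because [(x - m) g = - v g']
     and [(x - m) ^ 2 g = v (g - ((x - m) g)')]. *)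
  set (c := xi + zeta * (m - 1) ^ 2 + zeta * v).
  set (F := fun x => c * gaussian_primitive x - 2 * zeta * (m - 1) * v * gaussian v m x
                     - zeta * v * ((x - m) * gaussian v m x)).
  replace (sqrt (2 * PI * v) * c) with
    ((c * (r * (sqrt PI / 2)) - 2 * zeta * (m - 1) * v * 0 - zeta * v * 0)
     - (c * (r * - (sqrt PI / 2)) - 2 * zeta * (m - 1) * v * 0 - zeta * v * 0))
    by (rewrite <- gaussian_mass; ring).
  apply (is_int_R_antiderivative _ F).
  - intros x. unfold F.
    replace (b_fun xi zeta x * gaussian v m x) with
      (c * gaussian v m x - 2 * zeta * (m - 1) * v * (- (x - m) / v * gaussian v m x)
        - zeta * v * (1 * gaussian v m x + (x - m) * (- (x - m) / v * gaussian v m x)))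
      by (unfold b_fun, c; field; lra).
    apply (@is_derive_minus R_AbsRing R_NormedModule).
    apply (@is_derive_minus R_AbsRing R_NormedModule).
    + apply is_derive_scal, is_derive_gaussian_primitive.
    + apply is_derive_scal, is_derive_gaussian.
    + apply is_derive_scal.
      apply (@is_derive_mult R_AbsRing (fun y => y - m) (gaussian v m));
        [| apply is_derive_gaussian | intros; apply Rmult_comm].
      auto_derive; auto.
  - intros x. apply (@ex_derive_continuous R_AbsRing R_NormedModule).
    apply ex_derive_mult; [unfold b_fun; auto_derive; auto | eexists; apply is_derive_gaussian].
  - apply is_lim_minus'; [apply is_lim_minus'|]; apply is_lim_scal_l_finite.
    + apply is_lim_gaussian_primitive_m_infty.
    + apply is_lim_gaussian_m_infty.
    + apply is_lim_centered_gaussian_m_infty.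
  - apply is_lim_minus'; [apply is_lim_minus'|]; apply is_lim_scal_l_finite.
    + apply is_lim_gaussian_primitive_p_infty.
    + apply is_lim_gaussian_p_infty.
    + apply is_lim_centered_gaussian_p_infty.
Qed.

End Gaussian.

Section Ground_state.
Variables (v m kappa S : R) (s s1 s2 : R -> R).
Hypothesis v_pos : 0 < v.
Hypothesis s_deriv : forall x, is_derive s x (s1 x).
Hypothesis s1_deriv : forall x, is_derive s1 x (s2 x).
Hypothesis s_ode : forall x, s2 x = ((x - m) ^ 2 / v ^ 2 - / v + kappa) * s x.
Hypothesis s_pos : forall x, 0 < s x.
Hypothesis s_int : is_int_R s S.

Let g := gaussian v m.
Let E (x : R) := exp ((x - m) ^ 2 / v).
(* [W] is the Wronskian [s' g - s g'] of [s] and the ground state [g]; the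
   quotient [u = s / g] satisfies [u' = W / g ^ 2 = W E]. *)
Let W (x : R) := s1 x * g x + s x * ((x - m) / v * g x).
Let u (x : R) := s x / g x.

Lemma is_derive_wronskian (x : R) : is_derive W x (kappa * s x * g x).
Proof.
  assert (Dg : is_derive (fun y => (y - m) / v * g y) x
                 (1 / v * g x + (x - m) / v * (- (x - m) / v * g x))).
  { apply (@is_derive_mult R_AbsRing (fun y => (y - m) / v) g);
      [auto_derive; auto | apply is_derive_gaussian; lra | intros; apply Rmult_comm]. }
  replace (kappa * s x * g x) with
    ((s2 x * g x + s1 x * (- (x - m) / v * g x))
     + (s1 x * ((x - m) / v * g x) + s x * (1 / v * g x + (x - m) / v * (- (x - m) / v * g x))))
    by (rewrite s_ode; field; lra).
  apply (@is_derive_plus R_AbsRing R_NormedModule).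
  - apply (@is_derive_mult R_AbsRing s1 g);
      [apply s1_deriv | apply is_derive_gaussian; lra | intros; apply Rmult_comm].
  - apply (@is_derive_mult R_AbsRing s (fun y => (y - m) / v * g y));
      [apply s_deriv | apply Dg | intros; apply Rmult_comm].
Qed.

Lemma is_derive_quotient (x : R) : is_derive u x (W x * E x).
Proof.
  assert (Hg : 0 < g x) by apply gaussian_pos.
  assert (HE : E x = 1 / g x ^ 2).
  { rewrite <- (gaussian_sqr_mul_exp v m v_pos x). fold g. unfold E. field. lra. }
  replace (W x * E x) with (s1 x * / g x + s x * (- (- (x - m) / v * g x) / g x ^ 2))
    by (unfold W; rewrite HE; field; lra).
  apply (@is_derive_mult R_AbsRing s (fun y => / g y));
    [apply s_deriv | | intros; apply Rmult_comm].
  apply (is_derive_inv g); [apply is_derive_gaussian; lra | lra].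
Qed.

Lemma quotient_pos (x : R) : 0 < u x.
Proof. apply Rdiv_lt_0_compat; [apply s_pos | apply gaussian_pos]. Qed.

Lemma quotient_increment (a b : R) : a <= b ->
  exists c, a <= c <= b /\ u b - u a = W c * E c * (b - a).
Proof. intros Hab. apply (MVT_is_derive u (fun x => W x * E x) a b Hab is_derive_quotient). Qed.

Lemma s_eq_quotient (x : R) : s x = u x * g x.
Proof. unfold u. field. pose proof (gaussian_pos v m x). fold g in H. lra. Qed.

Lemma wronskian_increasing (a b : R) : 0 <= kappa -> a <= b -> W a <= W b.
Proof.
  intros Hk Hab. destruct (MVT_is_derive W _ a b Hab is_derive_wronskian) as [c [_ Hc]].
  pose proof (s_pos c). pose proof (gaussian_pos v m c). fold g in H0.
  assert (0 <= kappa * s c * g c * (b - a))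
    by (apply Rmult_le_pos; [|lra]; apply Rmult_le_pos; nra).
  lra.
Qed.

Lemma wronskian_decreasing (a b : R) : kappa <= 0 -> a <= b -> W b <= W a.
Proof.
  intros Hk Hab. destruct (MVT_is_derive W _ a b Hab is_derive_wronskian) as [c [_ Hc]].
  pose proof (s_pos c). pose proof (gaussian_pos v m c). fold g in H0.
  assert (0 <= - kappa * s c * g c * (b - a))
    by (apply Rmult_le_pos; [|lra]; apply Rmult_le_pos; nra).
  lra.
Qed.

Let continuous_s (x : R) : continuous s x.
Proof. apply (continuous_of_is_derive _ (s1 x)), s_deriv. Qed.

Let s_nonneg (x : R) : 0 <= s x.
Proof. apply Rlt_le, s_pos. Qed.

(* A Wronskian bounded away from 0 on a half-line either makes [u] grow like
   [E], so that [s = u g] stays above a constant, or drives [u] negative. *)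

Lemma wronskian_ge_right_absurd (Y w : R) :
  0 < w -> (forall x, Y <= x -> w <= W x) -> False.
Proof.
  intros Hw HW.
  apply (not_is_int_R_ge_right s S w (Rmax Y (m + 4) + 1) continuous_s s_nonneg Hw); auto.
  intros y Hy. pose proof (Rmax_l Y (m + 4)). pose proof (Rmax_r Y (m + 4)).
  destruct (quotient_increment (y - 1) y) as [c [Hc Hu]]; [lra|].
  assert (HE : E (y - 1) <= E c).
  { apply exp_le_compat, Rmult_le_compat_r; [apply Rlt_le, Rinv_0_lt_compat, v_pos | nra]. }
  assert (HWc : w <= W c) by (apply HW; lra).
  pose proof (quotient_pos (y - 1)). pose proof (exp_pos ((y - 1 - m) ^ 2 / v)).
  assert (Hgrow : w * E (y - 1) <= u y).
  { replace (y - (y - 1)) with 1 in Hu by ring. unfold E in *. nra. }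
  assert (Hgain : 1 <= E (y - 1) * g y) by (apply exp_mul_gaussian_ge_1; [lra | nra]).
  assert (Hgy : 0 < g y) by apply gaussian_pos.
  rewrite s_eq_quotient. nra.
Qed.

Lemma wronskian_le_left_absurd (Y w : R) :
  0 < w -> (forall x, x <= Y -> W x <= - w) -> False.
Proof.
  intros Hw HW.
  apply (not_is_int_R_ge_left s S w (Rmin Y (m - 4) - 1) continuous_s s_nonneg Hw); auto.
  intros y Hy. pose proof (Rmin_l Y (m - 4)). pose proof (Rmin_r Y (m - 4)).
  destruct (quotient_increment y (y + 1)) as [c [Hc Hu]]; [lra|].
  assert (HE : E (y + 1) <= E c).
  { apply exp_le_compat, Rmult_le_compat_r; [apply Rlt_le, Rinv_0_lt_compat, v_pos | nra]. }
  assert (HWc : W c <= - w) by (apply HW; lra).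
  pose proof (quotient_pos (y + 1)). pose proof (exp_pos ((y + 1 - m) ^ 2 / v)).
  assert (Hgrow : w * E (y + 1) <= u y).
  { replace (y + 1 - y) with 1 in Hu by ring. unfold E in *. nra. }
  assert (Hgain : 1 <= E (y + 1) * g y) by (apply exp_mul_gaussian_ge_1; [lra | nra]).
  assert (Hgy : 0 < g y) by apply gaussian_pos.
  rewrite s_eq_quotient. nra.
Qed.

Lemma wronskian_le_right_absurd (Y w : R) :
  0 < w -> (forall x, Y <= x -> W x <= - w) -> False.
Proof.
  intros Hw HW.
  pose proof (quotient_pos Y) as HuY.
  set (z := Y + u Y / w + 1).
  assert (Hz : w * (z - Y) = u Y + w) by (unfold z; field; lra).
  destruct (quotient_increment Y z) as [c [Hc Hu]].
  { unfold z. assert (0 < u Y / w) by (apply Rdiv_lt_0_compat; lra). lra. }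
  assert (HWc : W c <= - w) by (apply HW; lra).
  assert (HE : 1 <= E c) by (apply exp_ge_1, Rdiv_le_0_compat; [apply pow2_ge_0 | lra]).
  assert (W c * E c * (z - Y) <= - w * (z - Y)) by (apply Rmult_le_compat_r; nra).
  pose proof (quotient_pos z). lra.
Qed.

Lemma wronskian_ge_left_absurd (Y w : R) :
  0 < w -> (forall x, x <= Y -> w <= W x) -> False.
Proof.
  intros Hw HW.
  pose proof (quotient_pos Y) as HuY.
  set (z := Y - u Y / w - 1).
  assert (Hz : w * (Y - z) = u Y + w) by (unfold z; field; lra).
  destruct (quotient_increment z Y) as [c [Hc Hu]].
  { unfold z. assert (0 < u Y / w) by (apply Rdiv_lt_0_compat; lra). lra. }
  assert (HWc : w <= W c) by (apply HW; lra).
  assert (HE : 1 <= E c) by (apply exp_ge_1, Rdiv_le_0_compat; [apply pow2_ge_0 | lra]).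
  assert (w * (Y - z) <= W c * E c * (Y - z)) by (apply Rmult_le_compat_r; nra).
  pose proof (quotient_pos z). lra.
Qed.

Lemma wronskian_eq_0 (y : R) : W y = 0.
Proof.
  destruct (Rtotal_order (W y) 0) as [Hn|[Hz|Hp]]; [| exact Hz |];
    exfalso; destruct (Rle_dec 0 kappa) as [Hk|Hk].
  - apply (wronskian_le_left_absurd y (- W y)); [lra|].
    intros x Hx. pose proof (wronskian_increasing x y Hk Hx). lra.
  - apply (wronskian_le_right_absurd y (- W y)); [lra|].
    intros x Hx. pose proof (wronskian_decreasing y x ltac:(lra) Hx). lra.
  - apply (wronskian_ge_right_absurd y (W y)); [lra|].
    intros x Hx. apply (wronskian_increasing y x Hk Hx).
  - apply (wronskian_ge_left_absurd y (W y)); [lra|].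
    intros x Hx. apply (wronskian_decreasing x y ltac:(lra) Hx).
Qed.

Lemma positive_integrable_solution_gaussian :
  kappa = 0 /\ forall x, s x = s m * gaussian v m x.
Proof.
  split.
  - assert (HD : is_derive W m 0).
    { apply (is_derive_ext (fun _ => 0)); [intros; symmetry; apply wronskian_eq_0|].
      apply (@is_derive_const R_AbsRing R_NormedModule). }
    pose proof (is_derive_unique _ _ _ HD) as H0.
    rewrite (is_derive_unique _ _ _ (is_derive_wronskian m)) in H0.
    pose proof (s_pos m). pose proof (gaussian_pos v m m) as Hg. fold g in Hg.
    apply Rmult_integral in H0 as [H0|H0]; [apply Rmult_integral in H0 as [H0|H0]|]; lra.
  - intros x. rewrite s_eq_quotient.
    replace (u x) with (u m).
    + unfold u, g. unfold gaussian at 1. replace (- (m - m) ^ 2 / (2 * v)) with 0 by (field; lra).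
      rewrite exp_0. field.
    + apply is_derive_0_const. intros z.
      replace 0 with (W z * E z) by (rewrite wronskian_eq_0; ring).
      apply is_derive_quotient.
Qed.

End Ground_state.

(* The mean of [b] under the normal law of mean [mu_E] and variance [sigma2_E];
   [F_fun] is [nu / b_mean]. *)
Definition b_mean (beta eta xi zeta y : R) : R :=
  xi + zeta * (mu_E eta zeta y - 1) ^ 2 + zeta * sigma2_E beta eta zeta y.

Section Endemic_level.
Variables (beta K nu gamma eta xi zeta : R).
Hypotheses (beta_pos : 0 < beta) (K_pos : 0 < K) (nu_pos : 0 < nu) (eta_pos : 0 < eta)
  (xi_pos : 0 < xi) (zeta_pos : 0 < zeta).

Let D (y : R) := eta + zeta * y.

Definition alg_residual (y : R) : R :=
  K * (gamma - eta * mu_E eta zeta y - sqrt beta * sqrt (D y))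
  - nu / b_mean beta eta xi zeta y - (1 + xi * K) * y.

Lemma alg_eq_residual (y : R) :
  alg_eq beta K nu gamma eta xi zeta y <-> alg_residual y = 0.
Proof. unfold alg_eq, alg_residual, F_fun, b_mean, mu_E, sigma2_E, D. split; intros; lra. Qed.

Lemma b_mean_pos (y : R) : 0 <= y -> 0 < b_mean beta eta xi zeta y.
Proof.
  intros Hy. unfold b_mean.
  pose proof (pow2_ge_0 (mu_E eta zeta y - 1)). pose proof (sqrt_pos (beta / D y)).
  unfold sigma2_E. fold (D y). nra.
Qed.

Lemma one_sub_mu_E (y : R) : 0 <= y -> 1 - mu_E eta zeta y = eta / D y.
Proof. intros Hy. unfold mu_E, D. field. nra. Qed.

Lemma mu_E_le (y1 y2 : R) : 0 <= y1 <= y2 -> mu_E eta zeta y1 <= mu_E eta zeta y2.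
Proof.
  intros Hy. pose proof (one_sub_mu_E y1 ltac:(lra)). pose proof (one_sub_mu_E y2 ltac:(lra)).
  assert (eta / D y2 <= eta / D y1)
    by (apply Rmult_le_compat_l; [lra | apply Rinv_le_contravar; unfold D; nra]).
  lra.
Qed.

Lemma b_mean_antitone (y1 y2 : R) : 0 <= y1 <= y2 ->
  b_mean beta eta xi zeta y2 <= b_mean beta eta xi zeta y1.
Proof.
  intros Hy. unfold b_mean, sigma2_E.
  assert (HD : / D y2 <= / D y1) by (apply Rinv_le_contravar; unfold D; nra).
  assert (Hsq : (mu_E eta zeta y2 - 1) ^ 2 <= (mu_E eta zeta y1 - 1) ^ 2).
  { replace (mu_E eta zeta y1 - 1) with (- (eta / D y1)) by (rewrite <- one_sub_mu_E; lra).
    replace (mu_E eta zeta y2 - 1) with (- (eta / D y2)) by (rewrite <- one_sub_mu_E; lra).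
    assert (0 <= eta / D y2) by (apply Rdiv_le_0_compat; unfold D; nra).
    assert (eta / D y2 <= eta / D y1) by (apply Rmult_le_compat_l; lra).
    nra. }
  assert (sqrt (beta / D y2) <= sqrt (beta / D y1))
    by (apply sqrt_le_1_alt, Rmult_le_compat_l; lra).
  fold (D y1) (D y2). nra.
Qed.

Lemma alg_residual_decreasing (y1 y2 : R) : 0 <= y1 < y2 -> alg_residual y2 < alg_residual y1.
Proof.
  intros Hy. unfold alg_residual.
  pose proof (mu_E_le y1 y2 ltac:(lra)).
  assert (sqrt (D y1) <= sqrt (D y2)) by (apply sqrt_le_1_alt; unfold D; nra).
  pose proof (b_mean_antitone y1 y2 ltac:(lra)). pose proof (b_mean_pos y2 ltac:(lra)).
  assert (nu / b_mean beta eta xi zeta y1 <= nu / b_mean beta eta xi zeta y2)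
    by (apply Rmult_le_compat_l; [lra | apply Rinv_le_contravar; auto]).
  pose proof (sqrt_pos beta).
  assert (K * eta * mu_E eta zeta y1 <= K * eta * mu_E eta zeta y2)
    by (apply Rmult_le_compat_l; nra).
  assert (K * sqrt beta * sqrt (D y1) <= K * sqrt beta * sqrt (D y2))
    by (apply Rmult_le_compat_l; nra).
  assert (xi * K * y1 <= xi * K * y2) by (apply Rmult_le_compat_l; nra).
  lra.
Qed.

Lemma continuous_alg_residual (y : R) : 0 <= y -> continuity_pt alg_residual y.
Proof.
  intros Hy. apply continuity_pt_filterlim, (@ex_derive_continuous R_AbsRing R_NormedModule).
  pose proof (b_mean_pos y Hy). unfold alg_residual, b_mean, mu_E, sigma2_E, D in *.
  auto_derive. repeat split; try nra. apply Rdiv_lt_0_compat; nra.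
Qed.

Lemma alg_residual_0_pos : basic_R0 beta K nu gamma eta xi zeta > 1 -> 0 < alg_residual 0.
Proof.
  unfold basic_R0, alg_residual. intros HR.
  assert (Hb : b_mean beta eta xi zeta 0 = xi + zeta + zeta * sqrt (beta / eta)).
  { unfold b_mean, mu_E, sigma2_E. replace (eta + zeta * 0) with eta by ring.
    replace (zeta * 0 / eta) with 0 by (field; lra). ring. }
  rewrite Hb. unfold mu_E, D. replace (eta + zeta * 0) with eta by ring.
  replace (zeta * 0 / eta) with 0 by (field; lra).
  rewrite <- sqrt_mult, (Rmult_comm beta) by lra.
  set (d := xi + zeta + zeta * sqrt (beta / eta)) in *.
  assert (Hd : 0 < d) by (unfold d; pose proof (sqrt_pos (beta / eta)); nra).
  assert (HR' : nu < K * (gamma - sqrt (eta * beta)) * d).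
  { replace (K * (gamma - sqrt (eta * beta)) * d)
      with (nu * (K / nu * (gamma - sqrt (eta * beta)) * d)) by (field; lra).
    rewrite <- (Rmult_1_r nu) at 1. apply Rmult_lt_compat_l; lra. }
  assert (nu / d < K * (gamma - sqrt (eta * beta))).
  { apply (Rmult_lt_reg_r d); [lra|].
    unfold Rdiv. rewrite Rmult_assoc, Rinv_l, Rmult_1_r by lra. lra. }
  lra.
Qed.

Lemma alg_residual_neg : alg_residual (Rabs (K * gamma) + 1) < 0.
Proof.
  set (M := Rabs (K * gamma) + 1).
  assert (HM : 0 < M) by (unfold M; pose proof (Rabs_pos (K * gamma)); lra).
  unfold alg_residual.
  assert (0 < nu / b_mean beta eta xi zeta M)
    by (apply Rdiv_lt_0_compat; [lra | apply b_mean_pos; lra]).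
  assert (0 <= K * (eta * mu_E eta zeta M)).
  { apply Rmult_le_pos; [lra|]. apply Rmult_le_pos; [lra|].
    unfold mu_E. apply Rdiv_le_0_compat; nra. }
  assert (0 <= K * (sqrt beta * sqrt (D M))).
  { apply Rmult_le_pos; [lra|]. apply Rmult_le_pos; apply sqrt_pos. }
  assert (0 <= xi * K * M) by (apply Rmult_le_pos; nra).
  assert (K * gamma <= M - 1) by (unfold M; rewrite Rplus_minus_r; apply Rle_abs).
  lra.
Qed.

Lemma alg_eq_unique_positive_root : basic_R0 beta K nu gamma eta xi zeta > 1 ->
  exists IE, 0 < IE /\ alg_eq beta K nu gamma eta xi zeta IE /\
    (forall y, 0 < y -> alg_eq beta K nu gamma eta xi zeta y -> y = IE).
Proof.
  intros HR.
  pose proof (alg_residual_0_pos HR). pose proof alg_residual_neg.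
  set (M := Rabs (K * gamma) + 1) in *.
  assert (HM : 0 < M) by (unfold M; pose proof (Rabs_pos (K * gamma)); lra).
  destruct (Ranalysis5.IVT_interv (fun y => - alg_residual y) 0 M) as [z [Hz Hres]];
    [intros y Hy; apply continuity_pt_opp, continuous_alg_residual; lra | lra | lra | lra |].
  assert (Hz0 : z <> 0) by (intros ->; lra).
  exists z. repeat split; [lra | apply alg_eq_residual; lra |].
  intros y Hy Halg. apply alg_eq_residual in Halg.
  destruct (Rtotal_order y z) as [Hlt|[Heq|Hgt]]; auto.
  - pose proof (alg_residual_decreasing y z ltac:(lra)). lra.
  - pose proof (alg_residual_decreasing z y ltac:(lra)). lra.
Qed.

End Endemic_level.

Section Steady_states.
Variables (beta K nu gamma eta xi zeta : R).
Hypotheses (beta_pos : 0 < beta) (K_pos : 0 < K) (nu_pos : 0 < nu) (eta_pos : 0 < eta)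
  (xi_pos : 0 < xi) (zeta_pos : 0 < zeta).

Lemma sigma2_E_pos (I : R) : 0 <= I -> 0 < sigma2_E beta eta zeta I.
Proof. intros HI. apply sqrt_lt_R0, Rdiv_lt_0_compat; nra. Qed.

Lemma S_E_alt (I : R) : 0 <= I ->
  S_E beta K gamma eta xi zeta I
  = K * (gamma - eta * mu_E eta zeta I - sqrt beta * sqrt (eta + zeta * I)) - (1 + xi * K) * I.
Proof. intros HI. unfold S_E, mu_E. field. split; nra. Qed.

Lemma alg_eq_iff_S_E (I : R) : 0 <= I ->
  alg_eq beta K nu gamma eta xi zeta I <->
  S_E beta K gamma eta xi zeta I = nu / b_mean beta eta xi zeta I.
Proof.
  intros HI. rewrite S_E_alt by exact HI. unfold alg_eq, F_fun, b_mean, mu_E, sigma2_E. lra.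
Qed.

Lemma S_E_pos (I : R) : 0 <= I -> alg_eq beta K nu gamma eta xi zeta I ->
  0 < S_E beta K gamma eta xi zeta I.
Proof.
  intros HI Halg. apply alg_eq_iff_S_E in Halg; [|exact HI]. rewrite Halg.
  apply Rdiv_lt_0_compat; [lra | now apply b_mean_pos].
Qed.

Lemma endemic_potential (I S x : R) : 0 <= I ->
  a_fun gamma eta x - (b_fun xi zeta x + / K) * I - S / K
  = - beta * ((x - mu_E eta zeta I) ^ 2 / sigma2_E beta eta zeta I ^ 2 - / sigma2_E beta eta zeta I)
    + (S_E beta K gamma eta xi zeta I - S) / K.
Proof.
  intros HI.
  assert (HD : 0 < eta + zeta * I) by nra.
  set (p := sqrt beta). set (q := sqrt (eta + zeta * I)).
  assert (Hp : 0 < p) by (apply sqrt_lt_R0; lra).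
  assert (Hq : 0 < q) by (apply sqrt_lt_R0; lra).
  assert (Hp2 : p ^ 2 = beta) by (apply pow2_sqrt; lra).
  assert (Hq2 : q ^ 2 = eta + zeta * I) by (apply pow2_sqrt; lra).
  assert (Hv : sigma2_E beta eta zeta I = p / q) by (apply sqrt_div_alt; lra).
  rewrite Hv. unfold S_E, mu_E, a_fun, b_fun. fold p q.
  rewrite <- Hp2. replace eta with (q ^ 2 - zeta * I) by lra.
  field. repeat split; lra.
Qed.

Lemma endemic_solution_gaussian (I : R) : 0 < I -> alg_eq beta K nu gamma eta xi zeta I ->
  endemic_solution beta K nu gamma eta xi zeta
    (s_E beta eta zeta (S_E beta K gamma eta xi zeta I) I) I (S_E beta K gamma eta xi zeta I).
Proof.
  intros HI Halg.
  set (S := S_E beta K gamma eta xi zeta I).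
  set (v := sigma2_E beta eta zeta I). set (m := mu_E eta zeta I).
  assert (Hv : 0 < v) by (apply sigma2_E_pos; lra).
  assert (HS : 0 < S) by (apply S_E_pos; auto; lra).
  set (A := S * sqrt (1 / (2 * PI * v))).
  assert (HA : 0 < A).
  { apply Rmult_lt_0_compat; [lra|]. apply sqrt_lt_R0, Rdiv_lt_0_compat; [lra|].
    pose proof PI_RGT_0. nra. }
  assert (HAS : A * sqrt (2 * PI * v) = S)
    by (unfold A; rewrite Rmult_assoc, gaussian_normalization; [ring | exact Hv]).
  change (s_E beta eta zeta S I) with (fun x => A * gaussian v m x).
  split; [|split; [|split; [|split; [|split]]]].
  - exists (fun x => A * (- (x - m) / v * gaussian v m x)).
    exists (fun x => A * (((x - m) ^ 2 / v ^ 2 - / v) * gaussian v m x)).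
    intros x. split; [|split].
    + apply is_derive_scal, is_derive_gaussian, Hv.
    + apply is_derive_scal, is_derive_gaussian_derivative, Hv.
    + rewrite endemic_potential by lra. fold v m S. rewrite Rminus_diag. field. lra.
  - rewrite <- HAS. apply is_int_R_scal, is_int_R_gaussian, Hv.
  - exists nu. split; [|ring].
    apply alg_eq_iff_S_E in Halg; [|lra]. fold S in Halg.
    replace nu with (A * (sqrt (2 * PI * v) * b_mean beta eta xi zeta I))
      by (rewrite <- Rmult_assoc, HAS, Halg; field; apply Rgt_not_eq, b_mean_pos; lra).
    apply (is_int_R_ext (fun x => A * (b_fun xi zeta x * gaussian v m x))); [intros; ring|].
    apply is_int_R_scal, is_int_R_b_gaussian, Hv.
  - intros x. apply Rmult_lt_0_compat; [exact HA | apply gaussian_pos].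
  - exact HS.
  - exact HI.
Qed.

Lemma endemic_solution_gaussian_inv (s : R -> R) (I S : R) :
  endemic_solution beta K nu gamma eta xi zeta s I S ->
  alg_eq beta K nu gamma eta xi zeta I /\ S = S_E beta K gamma eta xi zeta I /\
  forall x, s x = s_E beta eta zeta (S_E beta K gamma eta xi zeta I) I x.
Proof.
  intros [[s1 [s2 Hd]] [Hint [[B [HB HBI]] [Hpos [HS HI]]]]].
  set (v := sigma2_E beta eta zeta I). set (m := mu_E eta zeta I).
  assert (Hv : 0 < v) by (apply sigma2_E_pos; lra).
  set (kappa := (S - S_E beta K gamma eta xi zeta I) / (K * beta)).
  assert (Hode : forall x, s2 x = ((x - m) ^ 2 / v ^ 2 - / v + kappa) * s x).
  { intros x. destruct (Hd x) as [_ [_ E]]. rewrite endemic_potential in E by lra. fold v m in E.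
    apply (Rmult_eq_reg_l beta); [|lra]. unfold kappa.
    set (Q := (x - m) ^ 2 / v ^ 2 - / v) in *. set (SE := S_E beta K gamma eta xi zeta I) in *.
    replace (beta * s2 x) with (- ((- beta * Q + (SE - S) / K) * s x)) by lra.
    field. lra. }
  destruct (positive_integrable_solution_gaussian v m kappa S s s1 s2 Hv
              (fun x => proj1 (Hd x)) (fun x => proj1 (proj2 (Hd x))) Hode Hpos Hint) as [Hk Hs].
  assert (HSE : S = S_E beta K gamma eta xi zeta I).
  { unfold kappa in Hk. apply Rmult_integral in Hk as [Hk|Hk]; [lra|].
    apply Rinv_neq_0_compat in Hk; [contradiction | nra]. }
  assert (Hmass : S = s m * sqrt (2 * PI * v)).
  { apply (is_int_R_unique s); [exact Hint|].
    apply (is_int_R_ext (fun x => s m * gaussian v m x)); [intros x; symmetry; apply Hs|].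
    apply is_int_R_scal, is_int_R_gaussian, Hv. }
  assert (HBnu : B = nu) by (apply Rmult_integral in HBI as [HBI|HBI]; lra).
  assert (HBS : B = S * b_mean beta eta xi zeta I).
  { apply (is_int_R_unique (fun x => b_fun xi zeta x * s x)); [exact HB|].
    rewrite Hmass, Rmult_assoc.
    apply (is_int_R_ext (fun x => s m * (b_fun xi zeta x * gaussian v m x)));
      [intros x; rewrite (Hs x); ring|].
    apply is_int_R_scal, is_int_R_b_gaussian, Hv. }
  split; [|split; [exact HSE|]].
  - apply alg_eq_iff_S_E; [lra|]. rewrite <- HSE, <- HBnu, HBS. field.
    apply Rgt_not_eq, b_mean_pos; lra.
  - intros x. rewrite (Hs x). unfold s_E. rewrite <- HSE, Hmass. fold v m.
    rewrite (Rmult_assoc (s m)), (Rmult_comm (sqrt _)), gaussian_normalization by exact Hv.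
    now rewrite Rmult_1_r.
Qed.

End Steady_states.

Theorem proposition2 (beta K nu gamma eta xi zeta : R) :
  0 < beta -> 0 < K -> 0 < nu -> 0 < gamma -> 0 < eta -> 0 < xi -> 0 < zeta ->
  gamma > eta ->
  gamma > sqrt (eta * beta) ->
  basic_R0 beta K nu gamma eta xi zeta > 1 ->
  exists IE : R,
    0 < IE /\ alg_eq beta K nu gamma eta xi zeta IE /\
    (forall y, 0 < y -> alg_eq beta K nu gamma eta xi zeta y -> y = IE) /\
    0 < S_E beta K gamma eta xi zeta IE /\
    endemic_solution beta K nu gamma eta xi zeta
      (s_E beta eta zeta (S_E beta K gamma eta xi zeta IE) IE) IE
      (S_E beta K gamma eta xi zeta IE) /\
    (forall (s : R -> R) (I S : R),
        endemic_solution beta K nu gamma eta xi zeta s I S ->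
        I = IE /\ S = S_E beta K gamma eta xi zeta IE /\
        (forall x, s x = s_E beta eta zeta (S_E beta K gamma eta xi zeta IE) IE x)).
Proof.
  intros Hbeta HK Hnu _ Heta Hxi Hzeta _ _ HR0.
  destruct (alg_eq_unique_positive_root beta K nu gamma eta xi zeta) as [IE [HIE [Halg Huniq]]];
    auto.
  exists IE. split; [exact HIE|]. split; [exact Halg|]. split; [exact Huniq|].
  split; [apply (S_E_pos beta K nu gamma eta xi zeta); auto; lra|].
  split; [apply endemic_solution_gaussian; auto|].
  intros s I S Hsol.
  assert (HI : 0 < I) by apply Hsol.
  destruct (endemic_solution_gaussian_inv beta K nu gamma eta xi zeta) with s I S
    as [HalgI [HS Hs]]; auto.
  rewrite <- (Huniq I HI HalgI). auto.
Qed.
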